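(* For every $\epsilon>0$ there exists $n_0(\epsilon)$ such that for every integer $n>n_0(\epsilon)$ there exists a rainbow set $R\subseteq\mathbb{F}_2^n$ with $|R|\ge\left(\frac{1}{\sqrt 2}-\epsilon\right)\sqrt n$.
   Context: For $x,y\in\mathbb{F}_2^n$, the Hamming distance is $d_H(x,y)=\#\{i:x_i\neq y_i\}$. A set $R\subseteq\mathbb{F}_2^n$ is called rainbow if the $\binom{|R|}{2}$ Hamming distances $d_H(x,y)$ over unordered pairs of distinct points $x,y\in R$ are pairwise distinct. *)

From mathcomp Require Import all_boot.
From Stdlib Require Import Reals.
Set Implicit Arguments. Unset Strict Implicit. Unset Printing Implicit Defensive.

Definition F2vec (n : nat) := {ffun 'I_n -> bool}.

Definition hamming (n : nat) (x y : F2vec n) : nat := #|[set i | x i != y i]|.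

(* A set is rainbow if the distances over unordered pairs of distinct points
   are pairwise distinct: equal distances force the same unordered pair. *)
Definition rainbow (n : nat) (R : {set F2vec n}) : Prop :=
  forall x y x' y', x \in R -> y \in R -> x' \in R -> y' \in R ->
    x != y -> x' != y' -> hamming x y = hamming x' y' ->
    (x = x' /\ y = y') \/ (x = y' /\ y = x').

(** Take the 2m+1 points v_0, ..., v_{2m} of F_2^n, where v_i is the indicator
    of the prefix [0, 2mi) together with a private block of length i placed
    after position 4m^2.  For i < j the two vectors differ exactly on
    [2mi, 2mj) and on the blocks of i and j, so d(v_i, v_j) = 2m(j - i) + i + j.
    Since i + j has the parity of j - i and lies in [j - i, 4m - (j - i)], this
    value determines j - i and then i.  The construction needs only 6m^2 + m
    coordinates, so taking m maximal gives about 2 sqrt(n/6) > sqrt(n/2)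
    points. *)
From mathcomp Require Import all_boot zify.
From Stdlib Require Import Reals Lra.

Set Implicit Arguments.
Unset Strict Implicit.
Unset Printing Implicit Defensive.

Lemma card_ord_pred n (P : pred nat) :
  #|[set t : 'I_n | P t]| = count P (iota 0 n).
Proof. by rewrite cardsE cardE -val_enum_ord count_map size_filter enumT. Qed.

Lemma count_itv lo hi n :
  count (fun t => lo <= t < hi) (iota 0 n) = minn hi n - minn lo n.
Proof.
elim: n => [|n IH]; first by rewrite /= !minn0.
rewrite -addn1 iotaD count_cat IH /= addn0.
by case: (leqP lo n) => ?; case: (ltnP n hi) => ? /=; lia.
Qed.

Lemma count_predU_disjoint T (a b : pred T) s :
  (forall x, a x -> b x = false) -> count (predU a b) s = count a s + count b s.
Proof.
move=> ab_disj; rewrite -count_predUI (@eq_count _ (predI a b) pred0) ?count_pred0 ?addn0 //.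
by move=> x /=; case ax: (a x); rewrite //= ab_disj.
Qed.

Lemma hamming_ffun n (P Q : pred nat) :
  hamming [ffun t : 'I_n => P t] [ffun t : 'I_n => Q t]
  = count (fun t => P t != Q t) (iota 0 n).
Proof. by rewrite /hamming -card_ord_pred; apply: eq_card => t; rewrite !inE !ffunE. Qed.

Lemma hammingC n (x y : F2vec n) : hamming x y = hamming y x.
Proof. by apply: eq_card => t; rewrite !inE eq_sym. Qed.

Lemma hamming_eq0 n (x y : F2vec n) : (hamming x y == 0) = (x == y).
Proof.
rewrite cards_eq0; apply/eqP/eqP => [xy | ->]; last by apply/setP => t; rewrite !inE eqxx.
by apply/ffunP => t; apply/eqP/negPn; move/setP/(_ t): xy; rewrite !inE => ->.
Qed.

Definition prefix_block (p b e : nat) : pred nat := fun t => (t < p) || (b <= t < e).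

Lemma prefix_block_xor p b e p' b' e' t :
  p <= p' <= b -> b <= e <= b' -> b' <= e' ->
  (prefix_block p b e t != prefix_block p' b' e' t)
  = [|| p <= t < p', b <= t < e | b' <= t < e'].
Proof.
rewrite /prefix_block => *.
by case: (ltnP t p) => ?; case: (ltnP t p') => ?; case: (leqP b t) => ?;
  case: (ltnP t e) => ?; case: (leqP b' t) => ?; case: (ltnP t e') => ? /=; lia.
Qed.

Lemma count_prefix_block_xor p b e p' b' e' n :
  p <= p' <= b -> b <= e <= b' -> b' <= e' <= n ->
  count (fun t => prefix_block p b e t != prefix_block p' b' e' t) (iota 0 n)
  = (p' - p) + (e - b) + (e' - b').
Proof.
move=> le_p le_b le_e.
rewrite (@eq_count _ _ (predU (fun t => p <= t < p')
           (predU (fun t => b <= t < e) (fun t => b' <= t < e')))); last first.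
  by move=> t; rewrite prefix_block_xor //; lia.
rewrite !count_predU_disjoint ?count_itv /=; try (move=> t; lia).
lia.
Qed.

Lemma distance_code_inj m i j i' j' : i < j <= 2 * m -> i' < j' <= 2 * m ->
  2 * m * (j - i) + i + j = 2 * m * (j' - i') + i' + j' -> i = i' /\ j = j'.
Proof.
move=> hij hij'; wlog le_d : i j i' j' hij hij' / j - i <= j' - i'.
  move=> W E; case: (leqP (j - i) (j' - i')) => [|/ltnW] le; first exact: W.
  by have [-> ->] := W _ _ _ _ hij' hij le (esym E).
have [k def_d'] : exists k, j' - i' = j - i + k by exists (j' - i' - (j - i)); lia.
rewrite def_d' mulnDr.
(* k = 1 fails by parity, k >= 2 because i' + j' <= 4m - (j' - i') *)
by case: k def_d' => [|[|k]] def_d' E; lia.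
Qed.

Lemma rainbow_imset_ord n k (f : nat -> F2vec n) :
  (forall a b a' b', a < b < k -> a' < b' < k ->
     hamming (f a) (f b) = hamming (f a') (f b') -> a = a' /\ b = b') ->
  rainbow [set f i | i : 'I_k].
Proof.
move=> f_inj x y x' y' /imsetP[a _ ->] /imsetP[b _ ->] /imsetP[a' _ ->] /imsetP[b' _ ->].
have ord_ne (c d : 'I_k) : f c != f d -> c < d < k \/ d < c < k.
  by case: (ltngtP c d) => [cd|dc|->]; rewrite ?eqxx ?ltn_ord; auto.
move=> /ord_ne[ab|ba] /ord_ne[ab'|ba'] E.
- by have [-> ->] := f_inj _ _ _ _ ab ab' E; left.
- by have [-> ->] := f_inj _ _ _ _ ab ba' (etrans E (hammingC _ _)); right.
- by have [-> ->] := f_inj _ _ _ _ ba ab' (etrans (hammingC _ _) E); right.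
- by have [-> ->] := f_inj _ _ _ _ ba ba' (etrans (hammingC _ _) (etrans E (hammingC _ _))); left.
Qed.

Section Ladder.

Variables m n : nat.
Hypothesis n_large : 6 * m * m + m <= n.

Definition ladder_point (i : nat) : F2vec n :=
  [ffun t : 'I_n => prefix_block (2 * m * i) (4 * m * m + 'C(i, 2)) (4 * m * m + 'C(i.+1, 2)) t].

Definition ladder : {set F2vec n} := [set ladder_point i | i : 'I_(2 * m).+1].

Lemma hamming_ladder_point i j : i < j <= 2 * m ->
  hamming (ladder_point i) (ladder_point j) = 2 * m * (j - i) + i + j.
Proof.
move=> /andP[lt_ij le_j].
have binS2 k : 'C(k.+1, 2) = 'C(k, 2) + k by rewrite binS bin1.
have bin_top : 'C((2 * m).+1, 2) = (2 * m).+1 * m.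
  by rewrite bin2 /= mulnCA mul2n half_double.
have blocks_ij := leq_bin2l 2 lt_ij.
have block_j_top := leq_bin2l 2 (le_j : j < (2 * m).+1).
rewrite binS2 in blocks_ij; rewrite binS2 bin_top in block_j_top.
by rewrite hamming_ffun count_prefix_block_xor ?mulnBr ?binS2; nia.
Qed.

Lemma rainbow_ladder : rainbow ladder.
Proof.
apply: rainbow_imset_ord => a b a' b' /andP[lt_ab lt_b] /andP[lt_ab' lt_b'].
by rewrite !hamming_ladder_point ?lt_ab ?lt_ab' //; apply: distance_code_inj; lia.
Qed.

Lemma card_ladder : #|ladder| = (2 * m).+1.
Proof.
rewrite card_imset ?card_ord // => a b /eqP; apply: contraTeq => ne_ab.
wlog lt_ab : a b ne_ab / a < b.
  move=> W; case: (ltngtP a b) => [|lt_ba|/val_inj eq_ab]; first exact: W.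
    by rewrite eq_sym W // eq_sym.
  by rewrite eq_ab eqxx in ne_ab.
have lt_b := ltn_ord b.
by rewrite -hamming_eq0 hamming_ladder_point -?lt0n; nia.
Qed.

End Ladder.

Lemma exists_bracket (f : nat -> nat) : f 0 = 0 -> (forall m, f m < f m.+1) ->
  forall n, exists m, f m <= n < f m.+1.
Proof.
move=> f0 f_incr; elim=> [|n [m /andP[le_fm lt_fm]]].
  by exists 0; have := f_incr 0; rewrite f0.
have := f_incr m.+1; case: (ltnP n.+1 (f m.+1)) => [lt_n|le_n] lt_f.
- by exists m; rewrite lt_n andbT; lia.
- by exists m.+1; rewrite le_n; lia.
Qed.

Lemma sqrt_half_le_nat (eps : R) (n k : nat) : (0 <= eps)%R -> n <= 2 * (k * k) ->
  ((1 / sqrt 2 - eps) * sqrt (INR n) <= INR k)%R.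
Proof.
move=> eps_ge0 /leP/le_INR; rewrite !mult_INR [INR 2]/= => le_nk.
have sqrt2_gt0 : (0 < sqrt 2)%R by apply: sqrt_lt_R0; lra.
have k_ge0 := pos_INR k; have sqrtn_ge0 := sqrt_pos (INR n).
have le_sqrt : (sqrt (INR n) <= sqrt 2 * INR k)%R.
  rewrite -(sqrt_square (INR k)) // -sqrt_mult; [apply: sqrt_le_1_alt | | nra]; lra.
have : (1 / sqrt 2 * sqrt (INR n) <= INR k)%R.
  apply: (Rmult_le_reg_l (sqrt 2)) => //.
  by rewrite -Rmult_assoc /Rdiv Rmult_1_l Rinv_r; lra.
have : (0 <= eps * sqrt (INR n))%R by apply: Rmult_le_pos.
lra.
Qed.

Theorem theorem1p5 :
  forall eps : R, (0 < eps)%R ->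
  exists n0 : nat, forall n : nat, (n0 < n)%nat ->
    exists S : {set F2vec n}, rainbow S /\
      ((1 / sqrt 2 - eps) * sqrt (INR n) <= INR #|S|)%R.
Proof.
move=> eps eps_gt0; exists 100 => n lt_n.
have [|m /andP[le_n lt_n']] := @exists_bracket (fun m => 6 * m * m + m) erefl _ n.
  by move=> m; nia.
(* 6 (m+1)^2 + (m+1) <= 2 (2m+1)^2 as soon as m >= 4, i.e. n >= 100 *)
have m_ge4 : 4 <= m by nia.
exists (ladder m n); split; first exact: rainbow_ladder le_n.
by rewrite (card_ladder le_n); apply: sqrt_half_le_nat; [lra | nia].
Qed.
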